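(* The families $\mathrm{SLT}_1$ and $\mathrm{RL}_1^V$ are incomparable; in particular $\{a\}\in\mathrm{RL}_1^V\setminus\mathrm{SLT}_1$ and $\{a\}\{b\}^*\{a\}\cup\{a\}\in\mathrm{SLT}_1\setminus\mathrm{RL}_1^V$.
   Context: Strictly locally testable languages: let $V$ be an alphabet and $k\ge1$. For $B,I,E\subseteq V^k$ and $F\subseteq V^{\le k-1}$, $\mathrm{slt}(B,I,E,F)$ is the language over $V$ consisting of all words in $F$ together with all words $a_1\cdots a_n$ ($a_i\in V$, $n\ge k$) with $a_1\cdots a_k\in B$, $a_{j+1}\cdots a_{j+k}\in I$ for all $1\le j\le n-k-1$, and $a_{n-k+1}\cdots a_n\in E$. $\mathrm{SLT}_k$ is the family of languages of this form. A right-linear grammar is $G=(N,T,P,S)$ with rules $A\to wB$ or $A\to w$ ($A,B\in N$, $w\in T^*$). For a regular language $L$, $\mathrm{Var}_{RL}(L)$ is the minimum of $|N|$ over all right-linear grammars generating $L$; $\mathrm{RL}_n^V=\{L\text{ regular}:\mathrm{Var}_{RL}(L)\le n\}$. *)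

From Stdlib Require Import Relations.Relation_Operators.
From mathcomp Require Import all_boot.
Set Implicit Arguments. Unset Strict Implicit. Unset Printing Implicit Defensive.

Definition lang (V : finType) := seq V -> Prop.

Definition lang_eq (V : finType) (L M : lang V) := forall w, L w <-> M w.

(* slt_k(B, I, E, F) over V, literally as in the paper:
   words of F, together with words a_1..a_n (n >= k) with
   a_1..a_k in B, a_{j+1}..a_{j+k} in I for 1 <= j <= n-k-1,
   a_{n-k+1}..a_n in E. *)
Definition slt (V : finType) (k : nat) (B I E F : lang V) : lang V :=
  fun w => F w \/
    [/\ k <= size w,
        B (take k w),
        (forall j, 1 <= j -> j <= size w - k - 1 -> I (take k (drop j w))) &
        E (drop (size w - k) w)].

Definition SLT (V : finType) (k : nat) (L : lang V) : Prop :=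
  exists B I E F : lang V,
    [/\ (forall w, B w -> size w = k),
        (forall w, I w -> size w = k),
        (forall w, E w -> size w = k),
        (forall w, F w -> size w <= k - 1) &
        lang_eq L (slt k B I E F)].

(* Right-linear grammar with n nonterminals 'I_n and terminal alphabet V:
   a finite list of rules A -> w B  (Some B)  or  A -> w  (None). *)
Record rl_grammar (V : finType) (n : nat) := RLGrammar {
  rl_rules : seq ('I_n * seq V * option 'I_n);
  rl_start : 'I_n }.

Definition sform (V : finType) (n : nat) := (seq V * option 'I_n)%type.

Definition rl_step (V : finType) (n : nat) (G : rl_grammar V n)
  (x y : sform V n) : Prop :=
  exists u A w oB, x = (u, Some A) /\ y = (u ++ w, oB) /\ (A, w, oB) \in rl_rules G.

Definition rl_lang (V : finType) (n : nat) (G : rl_grammar V n) : lang V :=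
  fun w => clos_refl_trans (sform V n) (@rl_step V n G) ([::], Some (rl_start G)) (w, None).

(* RL_n^V = { L regular : Var_RL(L) <= n }, i.e. L is generated by a right-linear
   grammar with at most n nonterminals (such L is automatically regular). *)
Definition RLV (V : finType) (n : nat) (L : lang V) : Prop :=
  exists m, m <= n /\ exists G : rl_grammar V m, lang_eq L (rl_lang G).

Definition lang_a (V : finType) (a : V) : lang V := fun w => w = [:: a].

Definition lang_aba (V : finType) (a b : V) : lang V :=
  fun w => w = [:: a] \/ exists m, w = a :: nseq m b ++ [:: a].

(* In slt(B,I,E,F) with k = 1 the set F may only
   contain the empty word, and a word of length one or two is tested by B and E
   alone.  Hence an SLT_1 language containing a one-letter word x also contains
   xx, so {a} is not in SLT_1.  Conversely {a}{b}^*{a} u {a} is exactly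
   slt({a},{b},{a},{}), the interior letters being tested one by one against I.

   For a
   grammar with the single nonterminal S, a rule S -> rS lets us prepend r to
   every generated word.  In {a}{b}^*{a} u {a} the word a can be prefixed by r
   at most once when r is nonempty (r r a would contain three a's), so all
   recursive rules emit nothing; then every generated word is the body of a
   terminating rule, which bounds the length of the generated words, whereas
   a b^N a is in the language for every N. *)
From Stdlib Require Import Relations.Relation_Operators.
From mathcomp Require Import all_boot zify.
Set Implicit Arguments. Unset Strict Implicit.

Section RightLinearDerivations.
Variables (V : finType) (n : nat) (G : rl_grammar V n).

Definition derives : sform V n -> sform V n -> Prop :=
  clos_refl_trans (sform V n) (@rl_step V n G).

Lemma derives_invariant (P : sform V n -> Prop) :
  (forall x y, rl_step G x y -> P x -> P y) ->
  forall x y, derives x y -> P x -> P y.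
Proof.
move=> Pstep x y; elim=> [x0 y0 /Pstep // | // | x0 y0 z0 _ Pxy _ Pyz].
by move=> /Pxy /Pyz.
Qed.

Lemma derives_prepend r x y :
  derives x y -> derives (r ++ x.1, x.2) (r ++ y.1, y.2).
Proof.
elim=> [x0 y0 [u [A [w [oB [-> [-> rule]]]]]] | x0 | x0 y0 z0 _ Dxy _ Dyz].
- by apply: rt_step; exists (r ++ u), A, w, oB; rewrite catA.
- exact: rt_refl.
- exact: rt_trans Dxy Dyz.
Qed.

Definition silent_recursion : Prop :=
  forall A w B, (A, w, Some B) \in rl_rules G -> w = [::].

Lemma rl_lang_terminal_rule :
  silent_recursion -> forall w, rl_lang G w -> exists A, (A, w, None) \in rl_rules G.
Proof.
move=> silent w gen_w.
pose P (x : sform V n) := match x with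
  | (u, Some _) => u = [::]
  | (u, None) => exists A, (A, u, None) \in rl_rules G end.
suff: P (w, None) by [].
apply: (derives_invariant (P := P) _ gen_w) => //.
move=> _ _ [u [A [w' [[B|] [-> [-> rule]]]]]] /= ->; last by exists A.
exact: silent rule.
Qed.

Definition longest_rule : nat := \max_(p <- rl_rules G) size p.1.2.

Lemma rl_lang_size_bound :
  silent_recursion -> forall w, rl_lang G w -> size w <= longest_rule.
Proof.
move=> silent w /(rl_lang_terminal_rule silent) [A rule].
exact: (leq_bigmax_seq (F := fun p : 'I_n * seq V * option 'I_n => size p.1.2) _ rule).
Qed.

End RightLinearDerivations.

Lemma rl1_prepend (V : finType) (G : rl_grammar V 1) r w :
  (ord0, r, Some ord0) \in rl_rules G -> rl_lang G w -> rl_lang G (r ++ w).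
Proof.
move=> rule gen_w; have := derives_prepend r gen_w; rewrite /= cats0.
apply: rt_trans; apply: rt_step; exists [::], (rl_start G), r, (Some ord0).
by rewrite (ord1 (rl_start G)).
Qed.

(* In SLT_1 a one-letter word x passes the same tests as xx. *)
Lemma slt1_singleton_double (V : finType) (L : lang V) (x : V) :
  SLT 1 L -> L [:: x] -> L [:: x; x].
Proof.
case=> B [I [E [F [_ _ _ F_short eqL]]]] /eqL [/F_short // | [_ Bx _ Ex]].
by apply/eqL; right; split => // -[|j].
Qed.

Lemma slt1_interior (V : finType) (I : lang V) (x z : V) (s : seq V) :
  (forall j, 1 <= j -> j <= size (x :: s ++ [:: z]) - 1 - 1 ->
     I (take 1 (drop j (x :: s ++ [:: z])))) <->
  (forall i, i < size s -> I [:: nth x s i]).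
Proof.
have letter i : i < size s -> take 1 (drop i.+1 (x :: s ++ [:: z])) = [:: nth x s i].
  move=> lt_is; have lt_isz : i < size (s ++ [:: z]) by rewrite size_cat; lia.
  by rewrite /= (drop_nth x lt_isz) nth_cat lt_is /= take0.
rewrite /= size_cat addn1 !subn1 /=.
split=> [Imid i lt_is | Is [//|i] _ lt_is]; last by rewrite letter //; apply: Is.
by rewrite -letter //; apply: Imid.
Qed.

Section TwoLetters.
Variables (V : finType) (a b : V).

Lemma lang_aba_sltE :
  lang_eq (lang_aba a b) (slt 1 (lang_a a) (lang_a b) (lang_a a) (fun _ => False)).
Proof.
have only_b s : (forall i, i < size s -> lang_a b [:: nth a s i]) <-> s = nseq (size s) b.
  rewrite /lang_a; split=> [Ib | ->]; last by move=> i; rewrite size_nseq nth_nseq => ->.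
  apply/all_pred1P; apply/(all_nthP a) => i /Ib [->] /=; exact: eqxx.
move=> w; split.
- case=> [->|[m ->]]; right.
    by split=> // -[|j].
  split=> //=; first by rewrite take0.
    by apply/slt1_interior/only_b; rewrite size_nseq.
  by rewrite size_cat size_nseq addn1 subn1 /= drop_size_cat ?size_nseq.
- case=> // -[]; case: w => [|x w] //= _ [->].
  case/lastP: w => [|s z] _; first by left.
  rewrite -cats1 => /slt1_interior/only_b mid.
  rewrite size_cat addn1 subn1 /= drop_size_cat // => -[->].
  by right; exists (size s); rewrite -mid.
Qed.

Lemma slt1_aba : SLT 1 (lang_aba a b).
Proof.
exists (lang_a a), (lang_a b), (lang_a a), (fun _ => False).
by split=> [w ->|w ->|w ->|//|]; last exact: lang_aba_sltE.
Qed.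

Hypothesis hab : a != b.

Lemma lang_aba_shape w : lang_aba a b w -> head a w = a /\ count_mem a w <= 2.
Proof.
have no_a m : count_mem a (nseq m b) = 0 by rewrite count_nseq /= eq_sym (negbTE hab).
by case=> [->|[m ->]]; rewrite /= ?count_cat ?no_a /= eqxx.
Qed.

Lemma lang_aba_no_double_prefix r :
  r != [::] -> lang_aba a b (r ++ [:: a]) -> ~ lang_aba a b (r ++ r ++ [:: a]).
Proof.
case: r => [//|x r] _ /lang_aba_shape [/= ->] _ /lang_aba_shape [_].
by rewrite /= eqxx count_cat /= eqxx count_cat /= eqxx; lia.
Qed.

Lemma not_rlv1_aba : ~ RLV 1 (lang_aba a b).
Proof.
case=> -[|[|m]] [_ [G eqL]] //; first by case: (rl_start G).
have silent : silent_recursion G.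
  move=> A r B; rewrite (ord1 A) (ord1 B) => rule.
  have [//|r_nil] := eqVneq r [::]; exfalso.
  have gen1 := rl1_prepend rule ((eqL [:: a]).1 (or_introl erefl)).
  have gen2 := rl1_prepend rule gen1.
  exact: lang_aba_no_double_prefix r_nil ((eqL _).2 gen1) ((eqL _).2 gen2).
pose N := longest_rule G.
have long : lang_aba a b (a :: nseq N b ++ [:: a]) by right; exists N.
have := rl_lang_size_bound silent ((eqL _).1 long).
by rewrite /= size_cat size_nseq; lia.
Qed.

End TwoLetters.

Lemma rlv1_singleton (V : finType) (a : V) : RLV 1 (lang_a a).
Proof.
pose G := RLGrammar [:: (ord0, [:: a], None)] (@ord0 0).
exists 1; split=> //; exists G => w; split.
  by move=> ->; apply: rt_step; exists [::], ord0, [:: a], None; rewrite mem_seq1.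
move=> gen_w; pose P (x : sform V 1) := match x with
  | (u, Some _) => u = [::] | (u, None) => u = [:: a] end.
suff: P (w, None) by [].
apply: (derives_invariant (P := P) _ gen_w) => //.
move=> _ _ [u [A [w' [oB [-> [-> rule]]]]]] /= ->.
by move: rule; rewrite mem_seq1 => /eqP [_ -> ->].
Qed.

Lemma not_slt1_singleton (V : finType) (a : V) : ~ SLT 1 (lang_a a).
Proof. by move=> /slt1_singleton_double /(_ erefl). Qed.

Theorem mainTheorem12 (V : finType) (a b : V) (hab : a != b) :
  ((exists L : lang V, SLT 1 L /\ ~ RLV 1 L) /\
   (exists L : lang V, RLV 1 L /\ ~ SLT 1 L)) /\
  (RLV 1 (lang_a a) /\ ~ SLT 1 (lang_a a)) /\
  (SLT 1 (lang_aba a b) /\ ~ RLV 1 (lang_aba a b)).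
Proof.
have slt_aba := slt1_aba a b; have not_rlv_aba := not_rlv1_aba hab.
have rlv_a := rlv1_singleton a; have not_slt_a := @not_slt1_singleton V a.
by split; [split; [exists (lang_aba a b) | exists (lang_a a)] | split].
Qed.
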